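(* Let $a,b,c\in\mathbb{R}$ with $b\neq 0$ and write $-a/b=2n+3$. Any linear Hopf sphere $\mathcal{S}$ satisfying $0=ar_1+br_2+c$ has astigmatism of the form $s=C_0\sin^{2n+2}\theta$ and support function of the form $$r=C_2\cos\theta+C_1+C_0\left[\frac{\sin^{2n+2}\theta}{2n+2}-\cos\theta\int_0^\theta\sin^{2n+1}\vartheta\,d\vartheta\right],$$ for constants $C_0,C_1,C_2$.
   Context: $\mathscr{W}$ is the set of embedded $C^2$-smooth topological 2-spheres in $\mathbb{R}^3$ that are rotationally symmetric and strictly convex. A surface in $\mathscr{W}$ is parametrised by the inverse Gauss map with $\theta\in[0,\pi]$ the angle between the outward normal and the symmetry axis. The support function is $r(\theta)=\vec X\cdot\hat n$, the radii of curvature are $r_1=\frac{\cos^2\theta}{\sin\theta}\frac{d}{d\theta}\left(\frac{r}{\cos\theta}\right)$, $r_2=r''+r$, and the astigmatism is $s=r_2-r_1$. A linear Hopf sphere (for $a,b,c$) is a surface in $\mathscr{W}$ on which $ar_1+br_2+c=0$ holds identically. *)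

From HB Require Import structures.
From mathcomp Require Import all_boot all_order all_algebra.
From mathcomp Require Import all_classical all_reals all_analysis.
Set Implicit Arguments. Unset Strict Implicit. Unset Printing Implicit Defensive.
Import Order.TTheory GRing.Theory Num.Theory.
Import numFieldNormedType.Exports.
Local Open Scope classical_set_scope.
Local Open Scope ring_scope.

Section Hopf.
Variable R : realType.
Implicit Types (r : R -> R) (t : R).

(* Radius of curvature r1 = cos^2 t / sin t * d/dt (r / cos t),
   written out as r + r' cos t / sin t (valid for 0 < t < pi). *)
Definition radius1 r t : R := r t + derive1 r t * cos t / sin t.

Definition radius2 r t : R := derive1 (derive1 r) t + r t.

Definition astigmatism r t : R := radius2 r t - radius1 r t.

(* Support functions (of the polar angle t in [0,pi]) of surfaces in W:
   C^2 across [0,pi] (the support function extends evenly across the poles),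
   regular at the poles (r'(0) = r'(pi) = 0), strictly convex
   (positive radii of curvature). *)
Definition in_W r : Prop :=
  [/\ (forall t, 0 <= t <= pi ->
         [/\ derivable r t 1, derivable (derive1 r) t 1 &
             {for t, continuous (derive1 (derive1 r))}]),
      derive1 r 0 = 0, derive1 r pi = 0,
      (forall t, 0 < t < pi -> 0 < radius1 r t) &
      (forall t, 0 <= t <= pi -> 0 < radius2 r t)].

Definition linear_hopf (a b c : R) r : Prop :=
  in_W r /\ forall t, 0 < t < pi -> a * radius1 r t + b * radius2 r t + c = 0.

End Hopf.

From HB Require Import structures.
From mathcomp Require Import all_boot all_order all_algebra.
From mathcomp Require Import all_classical all_reals all_analysis.
From mathcomp Require Import measurable_realfun lra ring.
Import Order.TTheory GRing.Theory Num.Theory.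
Import numFieldNormedType.Exports.
Local Open Scope classical_set_scope.
Local Open Scope ring_scope.

(* Write w := r'/sin.  Then r1 = r + w cos and s = r'' - w cos, so that
   w' = s/sin and r1' = s cos/sin on (0, pi).  The linear relation reads
   s = m r1 - c/b with m = 2n+2, hence s' = m s cos/sin and s = C0 sin^m.
   Since s vanishes at the poles, C0 = 0 or m > 0, and in both cases
   r1 = C1 + s/m.  Integrating w' = C0 sin^(m-1) from the pole, where
   w -> r''(0) by L'Hopital, gives w = r''(0) + C0 int_0^t sin^(m-1); the
   integral is improper because m - 1 may be negative.  Finally
   r = r1 - w cos on (0, pi), and the poles follow by continuity. *)

Section real_calculus.
Context {R : realType}.
Implicit Types (f g : R -> R) (a b l : R).

Lemma is_derive0_itv_cst {f a b} : (forall x, a < x < b -> is_derive x 1 f 0) ->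
  forall x y, a < x < b -> a < y < b -> f x = f y.
Proof.
move=> df.
suff ltE x y : a < x < b -> a < y < b -> x < y -> f x = f y.
  move=> x y hx hy; case: (ltgtP x y) => [xy|yx|-> //]; first exact: ltE.
  exact/esym/ltE.
move=> /andP[ax xb] /andP[ay yb] xy.
have dfxy z : z \in `]x, y[ -> is_derive z 1 f 0.
  by rewrite in_itv /= => /andP[xz zy]; apply: df; lra.
have [|c _] := MVT xy dfxy.
  apply: derivable_within_continuous => z; rewrite in_itv /= => /andP[xz zy].
  by have /df[] : a < z < b by lra.
by rewrite mul0r => /eqP; rewrite subr_eq0 => /eqP.
Qed.

Lemma eq_cvg_at_right f g a b l : a < b -> {for a, continuous f} ->
  g x @[x --> a^'+] --> l -> (forall x, a < x < b -> f x = g x) -> f a = l.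
Proof.
move=> ab cf gl fg.
have fl : f x @[x --> a^'+] --> l.
  apply: cvg_trans gl; apply: near_eq_cvg; near=> x; apply/esym/fg.
  by apply/andP; split; near: x; [exact: nbhs_right_gt|exact: nbhs_right_lt].
exact: cvg_unique _ (cvg_at_right_filter cf) fl.
Unshelve. all: by end_near. Qed.

Lemma eq_cvg_at_left f g a b l : a < b -> {for b, continuous f} ->
  g x @[x --> b^'-] --> l -> (forall x, a < x < b -> f x = g x) -> f b = l.
Proof.
move=> ab cf gl fg.
have fl : f x @[x --> b^'-] --> l.
  apply: cvg_trans gl; apply: near_eq_cvg; near=> x; apply/esym/fg.
  by apply/andP; split; near: x; [exact: nbhs_left_gt|exact: nbhs_left_lt].
exact: cvg_unique _ (cvg_at_left_filter cf) fl.
Unshelve. all: by end_near. Qed.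

End real_calculus.

Section improper_FTC.
Context {R : realType}.
Local Notation mu := (@lebesgue_measure R).
Implicit Types (f F : R -> R) (a b la lb : R).

Lemma continuous_FTC2_inner f F a b x y :
  (forall z, a < z < b -> {for z, continuous f}) ->
  (forall z, a < z < b -> is_derive z 1 F (f z)) ->
  a < x -> x < y -> y < b ->
  (\int[mu]_(z in `[x, y]) (f z)%:E = (F y - F x)%:E)%E.
Proof.
move=> cf dF ax xy yb.
have dFxy z : x <= z <= y -> is_derive z 1 F (f z) by move=> ?; apply: dF; lra.
have Fcont z : x <= z <= y -> {for z, continuous F}.
  by move=> /dFxy[dFz _]; exact/differentiable_continuous/derivable1_diffP.
rewrite EFinB; apply: continuous_FTC2 (xy) _ _ _.
- apply: continuous_in_subspaceT => z; rewrite inE /= in_itv /= => ?.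
  by apply: cf; lra.
- split.
  + move=> z; rewrite in_itv /= => /andP[? ?].
    by have [] : is_derive z 1 F (f z) by apply: dFxy; lra.
  + by apply: cvg_at_right_filter; apply: Fcont; rewrite lexx ltW.
  + by apply: cvg_at_left_filter; apply: Fcont; rewrite lexx ltW.
- move=> z; rewrite in_itv /= => /andP[? ?].
  by rewrite derive1E; have [_ ->] : is_derive z 1 F (f z) by apply: dFxy; lra.
Qed.

Lemma bigcup_itv_shrink a b (e : nat -> R) :
  (forall k, 0 < e k) -> e k @[k --> \oo] --> 0 ->
  \bigcup_k [set` `[a + e k, b - e k]] = [set` `]a, b[].
Proof.
move=> e0 ecvg; apply/seteqP; split => x /=.
  by move=> [k _]; rewrite /= !in_itv /= => /andP[? ?]; have := e0 k; lra.
rewrite in_itv /= => /andP[ax xb].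
have dx : 0 < Num.min (x - a) (b - x) by rewrite lt_min !subr_gt0 ax xb.
have [k _ /(_ k (leqnn k))] := (cvgrPdist_lt _ _).1 ecvg _ dx.
rewrite sub0r normrN gtr0_norm // lt_min => /andP[? ?].
by exists k => //=; rewrite in_itv /=; apply/andP; split; lra.
Qed.

Lemma ge0_continuous_FTC2_itvoo f F a b la lb : a < b ->
  (forall x, a < x < b -> 0 <= f x) ->
  (forall x, a < x < b -> {for x, continuous f}) ->
  (forall x, a < x < b -> is_derive x 1 F (f x)) ->
  F x @[x --> a^'+] --> la -> F x @[x --> b^'-] --> lb ->
  (\int[mu]_(x in `[a, b]) (f x)%:E = (lb - la)%:E)%E.
Proof.
move=> ab f0 cf dF Fa Fb.
pose e := geometric ((b - a) / 4) 2^-1.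
have e_gt0 k : 0 < e k by rewrite /= mulr_gt0 ?exprn_gt0 //; lra.
have e_lt k : e k < (b - a) / 2.
  have : 2^-1 ^+ k <= 1 :> R by rewrite exprn_ile1 //; lra.
  by rewrite /e /=; nra.
have e_cvg : e k @[k --> \oo] --> 0.
  by apply: cvg_geometric; rewrite gtr0_norm; lra.
pose I k := [set` `[a + e k, b - e k]].
have I_sub k : I k `<=` `]a, b[.
  by move=> x; rewrite /I /= !in_itv /= => /andP[? ?]; have := e_gt0 k; lra.
have mf : measurable_fun `]a, b[ f.
  apply: open_continuous_measurable_fun => // x.
  by rewrite inE /= in_itv /= => /cf.
have I_cvg : (\int[mu]_(x in I k) (f x)%:E)%E @[k --> \oo] -->
             (\int[mu]_(x in `]a, b[) (f x)%:E)%E.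
  rewrite -(bigcup_itv_shrink a b _ e_gt0 e_cvg).
  apply: ge0_nondecreasing_set_cvg_integral => [|k|k|k x /I_sub].
  - apply/nondecreasing_seqP => k; rewrite subsetEset => x; rewrite /I /= !in_itv /=.
    have : e k.+1 <= e k.
      by rewrite /e /= exprSr mulrA ler_piMr //; [exact/ltW/e_gt0|lra].
    lra.
  - exact: measurable_itv.
  - by apply/measurable_EFinP; apply: measurable_funS (I_sub k) mf.
  - by rewrite /= in_itv /= lee_fin => /f0.
have F_cvg : F (b - e k) - F (a + e k) @[k --> \oo] --> lb - la.
  apply: cvgB.
  - apply: (cvg_at_leftP F b lb).1 Fb (fun k => b - e k) _.
    split=> [k|]; first by have := e_gt0 k; lra.
    by rewrite -[X in _ --> X]subr0; apply: cvgB => //; exact: cvg_cst.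
  - apply: (cvg_at_rightP F a la).1 Fa (fun k => a + e k) _.
    split=> [k|]; first by have := e_gt0 k; lra.
    by rewrite -[X in _ --> X]addr0; apply: cvgD => //; exact: cvg_cst.
rewrite -integral_itv_obnd_cbnd; last first.
  exact/measurable_EFinP/measurable_fun_itv_bndo_bndcP.
rewrite -integral_itv_bndo_bndc; last exact/measurable_EFinP.
have I_FTC k : (\int[mu]_(x in I k) (f x)%:E = (F (b - e k) - F (a + e k))%:E)%E.
  by apply: continuous_FTC2_inner cf dF _ _ _; have := e_gt0 k; have := e_lt k; lra.
rewrite (funext I_FTC) in I_cvg.
have FE_cvg : (F (b - e k) - F (a + e k))%:E @[k --> \oo] --> (lb - la)%:E.
  by apply: cvg_EFin; [exact: nearW|exact: F_cvg].
exact: cvg_unique _ I_cvg FE_cvg.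
Qed.

End improper_FTC.

Section sin_power.
Context {R : realType}.
Implicit Types (f : R -> R) (m t : R).

Lemma is_derive_sin_powR m t : 0 < t < pi ->
  is_derive t 1 (fun x => sin x `^ m) (m * sin t `^ m * cos t / sin t).
Proof.
move=> /sin_gt0_pi st.
apply: is_derive_eq (is_derive1_comp (is_derive1_powR m st) (is_derive_sin t)) _.
rewrite powRB; last by rewrite (gt_eqF st) implybT.
by rewrite powRr1 ?ltW // mulrA mulrAC.
Qed.

Lemma sin_powR_ode f m :
  (forall t, 0 < t < pi -> is_derive t 1 f (m * f t * cos t / sin t)) ->
  exists C, forall t, 0 < t < pi -> f t = C * sin t `^ m.
Proof.
move=> df; pose q t := f t / sin t `^ m.
have sm_neq0 t : 0 < t < pi -> sin t `^ m != 0.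
  by move=> /sin_gt0_pi st; rewrite gt_eqF // powR_gt0.
have dq t : 0 < t < pi -> is_derive t 1 q 0.
  move=> ht; have /sin_gt0_pi st := ht.
  rewrite (_ : q = f * (fun x => (sin x `^ m)^-1)) //.
  have dsm := is_derive_sin_powR m t ht.
  have := is_deriveM (df t ht) (is_deriveV (f := fun x => sin x `^ m) (sm_neq0 t ht) dsm).
  move/is_derive_eq; apply.
  by rewrite /GRing.scale /=; field; rewrite sm_neq0 // gt_eqF.
have pi2 : 0 < (pi : R) / 2 < pi by have := @pi_gt0 R; lra.
exists (q (pi / 2)) => t ht.
by rewrite -(is_derive0_itv_cst dq _ _ ht pi2) /q divfK ?sm_neq0.
Qed.

Lemma cvg0_sin_powR (C m : R) :
  C * sin x `^ m @[x --> 0^'+] --> 0 -> C = 0 \/ 0 < m.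
Proof.
move=> Ccvg; case: (ltP 0 m) => [|m_le0]; [by right|left].
apply/eqP/negPn/negP => C_neq0.
have /filter_ex [x /andP[/andP[x0 xpi] Cx_lt]] :
    \forall x \near 0^'+, (0 < x < pi) && (`|0 - C * sin x `^ m| < `|C|).
  near=> x; apply/andP; split.
    by apply/andP; split; near: x; [exact: nbhs_right_gt|exact/nbhs_right_lt/pi_gt0].
  by near: x; move/cvgrPdist_lt : Ccvg; apply; rewrite normr_gt0.
have /andP[sx0 sx1] : 0 < sin x <= 1 by rewrite sin_gt0_pi ?x0 // sin_le1.
have : 1 <= sin x `^ m by rewrite -(powRr0 (sin x)) ger_powR ?sx0.
move: Cx_lt; rewrite sub0r normrN normrM (ger0_norm (powR_ge0 _ _)).
by rewrite ltNge => /negP + ?; apply; rewrite ler_peMr.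
Unshelve. all: by end_near. Qed.

End sin_power.

Lemma cos_neq0_itv {R : realType} (x : R) :
  0 <= x <= pi -> x != pi / 2 -> cos x != 0.
Proof.
move=> hx; apply: contra => /eqP cx0; apply/eqP/cos_inj; rewrite ?cos_pihalf //.
by have := @pi_gt0 R; rewrite in_itv /=; lra.
Qed.

Definition derive_div_sin {R : realType} (r : R -> R) t := derive1 r t / sin t.

Section support_function.
Context {R : realType} {r : R -> R}.
Local Notation r' := (derive1 r).
Local Notation r'' := (derive1 (derive1 r)).
Local Notation w := (derive_div_sin r).

Lemma radius1E t : radius1 r t = r t + w t * cos t.
Proof. by rewrite /radius1 /derive_div_sin mulrAC. Qed.

Lemma astigmatismE t : astigmatism r t = r'' t - w t * cos t.
Proof. by rewrite /astigmatism /radius2 radius1E; ring. Qed.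

Hypothesis r_C2 : forall t, 0 <= t <= pi ->
  [/\ derivable r t 1, derivable r' t 1 & {for t, continuous r''}].

Let is_derive_r t : 0 <= t <= pi -> is_derive t 1 r (r' t).
Proof. by move=> /r_C2[dr _ _]; rewrite derive1E; exact: derivableP. Qed.

Let is_derive_r' t : 0 <= t <= pi -> is_derive t 1 r' (r'' t).
Proof. by move=> /r_C2[_ dr' _]; rewrite derive1E; exact: derivableP. Qed.

Let continuous_r' t : 0 <= t <= pi -> {for t, continuous r'}.
Proof. by move=> /r_C2[_ dr' _]; exact/differentiable_continuous/derivable1_diffP. Qed.

Lemma is_derive_div_sin t : 0 < t < pi -> is_derive t 1 w (astigmatism r t / sin t).
Proof.
move=> ht; have st := sin_gt0_pi ht.
have t_in : 0 <= t <= pi by case/andP: ht => /ltW -> /ltW.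
rewrite (_ : w = r' * (fun x => (sin x)^-1)) //.
have dsinV := is_deriveV (f := sin) (lt0r_neq0 st) (is_derive_sin t).
have := is_deriveM (is_derive_r' t t_in) dsinV.
move/is_derive_eq; apply.
by rewrite astigmatismE /derive_div_sin /GRing.scale /=; field; rewrite gt_eqF.
Qed.

Lemma is_derive_radius1 t : 0 < t < pi ->
  is_derive t 1 (radius1 r) (astigmatism r t * cos t / sin t).
Proof.
move=> ht; have st := sin_gt0_pi ht.
have t_in : 0 <= t <= pi by case/andP: ht => /ltW -> /ltW.
rewrite (_ : radius1 r = r + w * cos); last by apply/funext => x; rewrite radius1E.
have dwcos := is_deriveM (is_derive_div_sin t ht) (is_derive_cos t).
have := is_deriveD (is_derive_r t t_in) dwcos.
move/is_derive_eq; apply.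
by rewrite astigmatismE /derive_div_sin /GRing.scale /=; field; rewrite gt_eqF.
Qed.

Hypotheses (dr0 : r' 0 = 0) (drpi : r' pi = 0).

Let pole_ratio_cvg t : 0 <= t <= pi -> cos t != 0 ->
  r'' x / cos x @[x --> t] --> r'' t / cos t.
Proof.
move=> /r_C2[_ _ cr''] ct.
exact: cvgM cr'' (cvgV ct (@continuous_cos R t)).
Qed.

Lemma derive_div_sin_cvg0 : w x @[x --> 0^'+] --> r'' 0.
Proof.
have pi0 := @pi_gt0 R.
have t0 : 0 <= (0 : R) <= pi by rewrite lexx pi_ge0.
apply: (@lhopital_at_right R r' r'' sin cos 0 (pi / 2)); first lra.
- by move=> x; rewrite in_itv /= => ?; apply: is_derive_r'; lra.
- rewrite -[X in _ --> X]dr0; exact: cvg_at_right_filter (continuous_r' 0 t0).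
- rewrite -[X in _ --> X]sin0; exact: cvg_at_right_filter (@continuous_sin R 0).
- by move=> x; rewrite in_itv /= => ?; apply: cos_neq0_itv; lra.
- have -> : r'' 0 = r'' 0 / cos 0 by rewrite cos0 divr1.
  apply: cvg_at_right_filter; apply: pole_ratio_cvg => //.
  by rewrite cos0 oner_neq0.
Qed.

Lemma derive_div_sin_cvgpi : w x @[x --> pi^'-] --> - r'' pi.
Proof.
have pi0 := @pi_gt0 R.
have tpi : 0 <= (pi : R) <= pi by rewrite lexx pi_ge0.
apply: (@lhopital_at_left R r' r'' sin cos (pi / 2) pi); first lra.
- by move=> x; rewrite in_itv /= => ?; apply: is_derive_r'; lra.
- rewrite -[X in _ --> X]drpi; exact: cvg_at_left_filter (continuous_r' pi tpi).
- rewrite -[X in _ --> X]sinpi; exact: cvg_at_left_filter (@continuous_sin R pi).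
- by move=> x; rewrite in_itv /= => ?; apply: cos_neq0_itv; lra.
- have -> : - r'' pi = r'' pi / cos pi by rewrite cospi invrN1 mulrN1.
  apply: cvg_at_left_filter; apply: pole_ratio_cvg => //.
  by rewrite cospi oppr_eq0 oner_neq0.
Qed.

Lemma astigmatism_cvg0 : astigmatism r x @[x --> 0^'+] --> 0.
Proof.
have t0 : 0 <= (0 : R) <= pi by rewrite lexx pi_ge0.
have [_ _ /cvg_at_right_filter cr''] := r_C2 0 t0.
rewrite (funext astigmatismE).
have cos_cvg := cvg_at_right_filter (@continuous_cos R 0).
apply: cvg_trans (cvgB cr'' (cvgM derive_div_sin_cvg0 cos_cvg)) _.
by rewrite cos0 mulr1 subrr.
Qed.

Lemma astigmatism_cvgpi : astigmatism r x @[x --> pi^'-] --> 0.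
Proof.
have tpi : 0 <= (pi : R) <= pi by rewrite lexx pi_ge0.
have [_ _ /cvg_at_left_filter cr''] := r_C2 pi tpi.
rewrite (funext astigmatismE).
have cos_cvg := cvg_at_left_filter (@continuous_cos R pi).
apply: cvg_trans (cvgB cr'' (cvgM derive_div_sin_cvgpi cos_cvg)) _.
by rewrite cospi mulrN1 opprK subrr.
Qed.

End support_function.

Lemma linear_hopf_astigmatism {R : realType} (a b c m : R) (r : R -> R) t :
  b != 0 -> - a / b = m + 1 -> a * radius1 r t + b * radius2 r t + c = 0 ->
  astigmatism r t = m * radius1 r t - c / b.
Proof.
move=> b0 hab hopf; have ha : a = - ((m + 1) * b) by rewrite -hab divfK // opprK.
have r2E : radius2 r t = ((m + 1) * b * radius1 r t - c) / b.
  by apply: (mulIf b0); rewrite divfK //; move: hopf; rewrite ha; lra.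
by rewrite /astigmatism r2E; field.
Qed.

Section linear_astigmatism.
Context {R : realType} {r : R -> R} {m k : R}.
Local Notation r'' := (derive1 (derive1 r)).
Local Notation w := (derive_div_sin r).
Hypothesis r_C2 : forall t, 0 <= t <= pi ->
  [/\ derivable r t 1, derivable (derive1 r) t 1 & {for t, continuous r''}].
Hypotheses (dr0 : derive1 r 0 = 0) (drpi : derive1 r pi = 0).
Hypothesis astigmatism_linear :
  forall t, 0 < t < pi -> astigmatism r t = m * radius1 r t - k.

Let pi2_itv : 0 < (pi : R) / 2 < pi.
Proof. by have := @pi_gt0 R; lra. Qed.

Lemma astigmatism_sin_powR :
  exists C0, forall t, 0 < t < pi -> astigmatism r t = C0 * sin t `^ m.
Proof.
apply: sin_powR_ode => t ht.
apply: (@near_eq_is_derive _ R^o R^o (fun x => m * radius1 r x - k)).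
  have t_itv : t \in `]0, pi[ by rewrite in_itv.
  near=> x; have : x \in `]0, pi[ by near: x; exact: near_in_itvoo.
  by rewrite in_itv /= => /astigmatism_linear ->.
have := is_deriveB (is_deriveZ m (is_derive_radius1 r_C2 t ht)) (is_derive_cst k t 1).
by move/is_derive_eq; apply; rewrite subr0 /GRing.scale /= !mulrA.
Unshelve. all: by end_near. Qed.

Context {C0 : R}.
Hypothesis astigmatism_sin : forall t, 0 < t < pi -> astigmatism r t = C0 * sin t `^ m.

Lemma astigmatism_coef_eq0_or_exponent_gt0 : C0 = 0 \/ 0 < m.
Proof.
apply: cvg0_sin_powR; apply: cvg_trans (astigmatism_cvg0 r_C2 dr0).
apply: near_eq_cvg; near=> x; rewrite astigmatism_sin //.
by apply/andP; split; near: x; [exact: nbhs_right_gt|exact/nbhs_right_lt/pi_gt0].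
Unshelve. all: by end_near. Qed.

(* For m = 0 the quotient [astigmatism r t / m] is 0, and so is C0. *)
Lemma radius1_astigmatism :
  exists C1, forall t, 0 < t < pi -> radius1 r t = C1 + astigmatism r t / m.
Proof.
case: astigmatism_coef_eq0_or_exponent_gt0 => [C00|m_gt0].
  exists (radius1 r (pi / 2)) => t ht.
  rewrite astigmatism_sin // C00 !mul0r addr0.
  apply: is_derive0_itv_cst _ _ _ ht pi2_itv => x hx.
  apply: is_derive_eq (is_derive_radius1 r_C2 x hx) _.
  by rewrite astigmatism_sin // C00 !mul0r.
exists (k / m) => t ht; rewrite astigmatism_linear //.
by field; rewrite gt_eqF.
Qed.

Lemma derive_div_sin_integral t l : 0 < t <= pi -> w x @[x --> t^'-] --> l ->
  C0 * Rintegral lebesgue_measure `[0, t] (fun v => sin v `^ (m - 1)) = l - r'' 0.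
Proof.
move=> /andP[t0 tpi] wl.
have pi0 := @pi_gt0 R.
have w_deriv x : 0 < x < pi -> is_derive x 1 w (C0 * sin x `^ (m - 1)).
  move=> hx; have sx := sin_gt0_pi hx.
  apply: is_derive_eq (is_derive_div_sin r_C2 x hx) _.
  rewrite astigmatism_sin // powRB; last by rewrite (gt_eqF sx) implybT.
  by rewrite powRr1 ?ltW // mulrA.
have [C00|C0_neq0] := eqVneq C0 0.
  pose c := w (pi / 2).
  have wc x : 0 < x < pi -> c = w x.
    move=> hx; apply: is_derive0_itv_cst pi2_itv hx => y hy.
    by rewrite -(mul0r (sin y `^ (m - 1))) -C00; exact: w_deriv.
  have wc0 : c = r'' 0.
    exact: eq_cvg_at_right (cst c) _ _ _ _ pi0 (cvg_cst c) (derive_div_sin_cvg0 r_C2 dr0) wc.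
  have wct : c = l.
    apply: eq_cvg_at_left (cst c) _ _ _ _ t0 (cvg_cst c) wl _.
    by move=> x /andP[? ?]; apply: wc; lra.
  by rewrite C00 mul0r -wc0 -wct subrr.
have f_ge0 x : 0 < x < t -> 0 <= sin x `^ (m - 1) by move=> _; exact: powR_ge0.
have f_cont x : 0 < x < t -> {for x, continuous (fun v => sin v `^ (m - 1))}.
  move=> ?; have /(is_derive_sin_powR (m - 1))[+ _] : 0 < x < pi by lra.
  by move/derivable1_diffP/differentiable_continuous.
have F_deriv x : 0 < x < t -> is_derive x 1 (fun v => w v / C0) (sin x `^ (m - 1)).
  move=> ?; have /w_deriv wx : 0 < x < pi by lra.
  have := is_deriveM wx (is_derive_cst C0^-1 x 1).
  move/is_derive_eq; apply.
  by rewrite /GRing.scale /= mulr0 add0r mulKf.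
have F_cvg0 : w x / C0 @[x --> 0^'+] --> r'' 0 / C0.
  by apply: cvgM (derive_div_sin_cvg0 r_C2 dr0) _; exact: cvg_cst.
have F_cvgt : w x / C0 @[x --> t^'-] --> l / C0 by apply: cvgM wl _; exact: cvg_cst.
have := ge0_continuous_FTC2_itvoo _ _ _ _ _ _ t0 f_ge0 f_cont F_deriv F_cvg0 F_cvgt.
by rewrite /Rintegral => -> /=; field.
Qed.

Lemma astigmatism_coef_powR0 : C0 * 0 `^ m = 0.
Proof.
case: astigmatism_coef_eq0_or_exponent_gt0 => [->|/lt0r_neq0/powR0 ->].
  by rewrite mul0r.
by rewrite mulr0.
Qed.

Context {C1 : R}.
Hypothesis radius1_sin : forall t, 0 < t < pi -> radius1 r t = C1 + astigmatism r t / m.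

Lemma supportE t : 0 < t < pi -> r t = C1 + astigmatism r t / m - w t * cos t.
Proof. by move=> ht; rewrite -radius1_sin // radius1E addrK. Qed.

Lemma support_at0 : r 0 = C1 - r'' 0.
Proof.
have t0 : 0 <= (0 : R) <= pi by rewrite lexx pi_ge0.
have [/derivable1_diffP/differentiable_continuous r_cont _ _] := r_C2 0 t0.
apply: eq_cvg_at_right r _ _ _ _ (pi_gt0 R) r_cont _ supportE.
apply: cvg_trans (cvgB (cvgD (cvg_cst C1) (cvgM (astigmatism_cvg0 r_C2 dr0) (cvg_cst m^-1)))
  (cvgM (derive_div_sin_cvg0 r_C2 dr0) (cvg_at_right_filter (@continuous_cos R 0)))) _.
by rewrite mul0r addr0 cos0 mulr1.
Qed.

Lemma support_atpi : r pi = C1 - r'' pi.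
Proof.
have tpi : 0 <= (pi : R) <= pi by rewrite lexx pi_ge0.
have [/derivable1_diffP/differentiable_continuous r_cont _ _] := r_C2 pi tpi.
apply: eq_cvg_at_left r _ _ _ _ (pi_gt0 R) r_cont _ supportE.
apply: cvg_trans (cvgB (cvgD (cvg_cst C1) (cvgM (astigmatism_cvgpi r_C2 drpi) (cvg_cst m^-1)))
  (cvgM (derive_div_sin_cvgpi r_C2 drpi) (cvg_at_left_filter (@continuous_cos R pi)))) _.
by rewrite mul0r addr0 cospi mulrN1 opprK.
Qed.

End linear_astigmatism.

Theorem proposition3p1 (R : realType) (a b c n : R) (r : R -> R) :
  b != 0 -> - a / b = 2 * n + 3 -> linear_hopf a b c r ->
  exists C0 C1 C2 : R,
    (forall t, 0 < t < pi ->
       astigmatism r t = C0 * (sin t `^ (2 * n + 2))) /\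
    (forall t, 0 <= t <= pi ->
       r t = C2 * cos t + C1
             + C0 * (sin t `^ (2 * n + 2) / (2 * n + 2)
                     - cos t * Rintegral lebesgue_measure `[0, t]
                                 (fun v => sin v `^ (2 * n + 1)))).
Proof.
move=> b0 hab [[r_C2 dr0 drpi _ _] hopf].
set m := 2 * n + 2; rewrite (_ : 2 * n + 1 = m - 1); last by rewrite /m; ring.
have s_lin t : 0 < t < pi -> astigmatism r t = m * radius1 r t - c / b.
  by move=> /hopf; apply: linear_hopf_astigmatism; rewrite // hab /m; ring.
have [C0 sE] := astigmatism_sin_powR r_C2 s_lin.
have [C1 r1E] := radius1_astigmatism r_C2 dr0 s_lin sE.
have C0_pow0 := astigmatism_coef_powR0 r_C2 dr0 sE.
exists C0, C1, (- derive1 (derive1 r) 0); split=> // t /andP[t0 tpi].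
have [->|tn0] := eqVneq t 0.
  rewrite (support_at0 r_C2 dr0 r1E) sin0 cos0 set_itv1 Rintegral_set1.
  by rewrite mulr0 subr0 mulrA C0_pow0 mul0r mulr1 addr0 addrC.
have [->|tnpi] := eqVneq t pi.
  rewrite (support_atpi r_C2 drpi r1E) sinpi cospi mulN1r opprK.
  rewrite mulrDr mulrA C0_pow0 mul0r add0r.
  rewrite (derive_div_sin_integral r_C2 dr0 sE _ _ _ (derive_div_sin_cvgpi r_C2 drpi)).
    by ring.
  by rewrite lexx pi_gt0.
have ht : 0 < t < pi by rewrite !lt_neqAle eq_sym tn0 t0 tnpi tpi.
have [/derivable1_diffP/differentiable_continuous w_cont _] := is_derive_div_sin r_C2 t ht.
rewrite (supportE r1E t ht) sE // mulrBr mulrA (mulrCA C0 (cos t)).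
rewrite (derive_div_sin_integral r_C2 dr0 sE _ _ _ (cvg_at_left_filter w_cont)).
  by ring.
by case/andP: ht => -> /ltW.
Qed.
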